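(* Let $\varphi=\nu\tilde n.\sigma$ be a frame well-formed with respect to $\mathtt{s}\in\tilde n$ such that $\varphi\nvdash\mathtt{s}$. Let $U$ be a term with all variables in $\mathrm{dom}(\varphi)$ and $M$ a closed term in normal form, such that $U$ and $M$ are public with respect to $\varphi$. If $U\sigma[\mathtt{s}/M]\rightarrow V$ for some term $V$, then there exists a frame $\varphi'=\nu\tilde n.\sigma'$ well-formed with respect to $\mathtt{s}$ such that: $x\sigma'=x\sigma$ for all $x\in\mathrm{dom}(\sigma)$; for every term $W$, $\varphi\vdash W$ iff $\varphi'\vdash W$; and $V=V'\sigma'[\mathtt{s}/M]$ and $U\sigma\rightarrow V'\sigma'$ for some term $V'$ public with respect to $\varphi'$.
   Context: Terms over $\Sigma=\{\mathsf{enc}/3,\mathsf{dec}/2,\mathsf{enca}/3,\mathsf{deca}/2,\mathsf{pub}/1,\mathsf{priv}/1,\langle\cdot,\cdot\rangle/2,\pi_1/1,\pi_2/1,\mathsf{sign}/2,\mathsf{check}/3,\mathsf{retrieve}/1\}$, constants (including $\mathsf{ok}$), names and variables; destructors are $\pi_1,\pi_2,\mathsf{dec},\mathsf{deca},\mathsf{check},\mathsf{retrieve}$. The rewrite system $\mathcal R_E$ consists of $\pi_i(\langle z_1,z_2\rangle)\to z_i$ ($i=1,2$), $\mathsf{dec}(\mathsf{enc}(z_1,z_2,z_3),z_2)\to z_1$, $\mathsf{deca}(\mathsf{enca}(z_1,\mathsf{pub}(z_2),z_3),\mathsf{priv}(z_2))\to z_1$, $\mathsf{check}(z_1,\mathsf{sign}(z_1,\mathsf{priv}(z_2)),\mathsf{pub}(z_2))\to\mathsf{ok}$,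 $\mathsf{retrieve}(\mathsf{sign}(z_1,z_2))\to z_1$; it is convergent, $=_E$ is its induced equality, and $U\to V$ denotes one rewrite step at some position. A frame $\varphi=\nu\tilde n.\sigma$: finite set of restricted names $\tilde n$ and acyclic substitution $\sigma$. Public term w.r.t. $\varphi$: contains no name of $\tilde n$ and no $\mathsf{priv}$. $\varphi\vdash M$: least relation containing $x\sigma$ ($x\in\mathrm{dom}(\sigma)$) and names outside $\tilde n$, closed under applying symbols other than $\mathsf{priv}$ and under $=_E$. $T[\mathtt{s}/M]$ replaces each occurrence of $\mathtt{s}$ by $M$. Positions are sequences of positive integers, $T|_p$ the subterm at $p$. An encryption occurrence $q$ in $U$ (head of $U|_q$ in $\{\mathsf{enc},\mathsf{enca}\}$) is an agent encryption w.r.t. names $\tilde m$ if $U|_{q\cdot3}\in\tilde m$, and a probabilistic encryption w.r.t. a set of terms $S$ if for all $V\in S$ and $p$ with $V|_p=U|_{q\cdot3}$, $p=q'\cdot3$ with $V|_{q'}=U|_q$. $\varphi$ is well-formed w.r.t. $\mathtt{s}$ if (1) every encryption in $\sigma$ is an agent encryption w.r.t. $\tilde n\setminus\{\mathtt{s}\}$ and a probabilistic encryption w.r.t. $\mathrm{ran}(\sigma)$; (2) for all subterms $\mathsf{enc}(M,K,R)$, $\mathsf{enca}(M',K',R')$, $\mathsf{sign}(U,V)$, $\mathsf{pub}(W)$, $\mathsf{priv}(W')$ of $\varphi$, $\mathtt{s}$ does not occur in $K,K',V,W,W',R,R'$; (3) $\varphi$ contains no destructor. *)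

From Stdlib Require Import List Arith Relations.
Import ListNotations.

Inductive term : Type :=
| Var (x : nat)
| Nm (a : nat)
| Cst (c : nat)
| Enc (m k r : term)
| Dec (c k : term)
| Enca (m k r : term)
| Deca (c k : term)
| Pub (t : term)
| Priv (t : term)
| Pair (a b : term)
| Pi1 (t : term)
| Pi2 (t : term)
| Sign (m k : term)
| Check (m s k : term)
| Retrieve (t : term).

Definition ok : term := Cst 0.

Definition children (t : term) : list term :=
  match t with
  | Var _ | Nm _ | Cst _ => []
  | Enc a b c => [a; b; c]
  | Dec a b => [a; b]
  | Enca a b c => [a; b; c]
  | Deca a b => [a; b]
  | Pub a => [a]
  | Priv a => [a]
  | Pair a b => [a; b]
  | Pi1 a => [a]
  | Pi2 a => [a]
  | Sign a b => [a; b]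
  | Check a b c => [a; b; c]
  | Retrieve a => [a]
  end.

Definition rebuild (t : term) (cs : list term) : term :=
  let a i := nth i cs (Cst 0) in
  match t with
  | Var _ | Nm _ | Cst _ => t
  | Enc _ _ _ => Enc (a 0) (a 1) (a 2)
  | Dec _ _ => Dec (a 0) (a 1)
  | Enca _ _ _ => Enca (a 0) (a 1) (a 2)
  | Deca _ _ => Deca (a 0) (a 1)
  | Pub _ => Pub (a 0)
  | Priv _ => Priv (a 0)
  | Pair _ _ => Pair (a 0) (a 1)
  | Pi1 _ => Pi1 (a 0)
  | Pi2 _ => Pi2 (a 0)
  | Sign _ _ => Sign (a 0) (a 1)
  | Check _ _ _ => Check (a 0) (a 1) (a 2)
  | Retrieve _ => Retrieve (a 0)
  end.

(* Positions: sequences of positive integers; T|_p *)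
Fixpoint subterm_at (t : term) (p : list nat) : option term :=
  match p with
  | [] => Some t
  | i :: p' =>
      match i with
      | 0 => None
      | S j => match nth_error (children t) j with
               | Some c => subterm_at c p'
               | None => None
               end
      end
  end.

Fixpoint replace_at (t : term) (p : list nat) (r : term) : term :=
  match p with
  | [] => r
  | i :: p' =>
      match i with
      | 0 => t
      | S j => match nth_error (children t) j with
               | Some c => rebuild t (firstn j (children t) ++
                                      replace_at c p' r :: skipn (S j) (children t))
               | None => t
               end
      end
  end.

Inductive root_step : term -> term -> Prop :=
| rs_pi1 z1 z2 : root_step (Pi1 (Pair z1 z2)) z1
| rs_pi2 z1 z2 : root_step (Pi2 (Pair z1 z2)) z2
| rs_dec z1 z2 z3 : root_step (Dec (Enc z1 z2 z3) z2) z1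
| rs_deca z1 z2 z3 : root_step (Deca (Enca z1 (Pub z2) z3) (Priv z2)) z1
| rs_check z1 z2 : root_step (Check z1 (Sign z1 (Priv z2)) (Pub z2)) ok
| rs_retrieve z1 z2 : root_step (Retrieve (Sign z1 z2)) z1.

Definition step (U V : term) : Prop :=
  exists p l r, subterm_at U p = Some l /\ root_step l r /\ V = replace_at U p r.

Definition eqE : term -> term -> Prop := clos_refl_sym_trans term step.

Definition normal_form (t : term) : Prop := forall V, ~ step t V.

Fixpoint tmap (f : term -> term) (t : term) : term :=
  match t with
  | Var _ | Nm _ | Cst _ => f t
  | Enc a b c => Enc (tmap f a) (tmap f b) (tmap f c)
  | Dec a b => Dec (tmap f a) (tmap f b)
  | Enca a b c => Enca (tmap f a) (tmap f b) (tmap f c)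
  | Deca a b => Deca (tmap f a) (tmap f b)
  | Pub a => Pub (tmap f a)
  | Priv a => Priv (tmap f a)
  | Pair a b => Pair (tmap f a) (tmap f b)
  | Pi1 a => Pi1 (tmap f a)
  | Pi2 a => Pi2 (tmap f a)
  | Sign a b => Sign (tmap f a) (tmap f b)
  | Check a b c => Check (tmap f a) (tmap f b) (tmap f c)
  | Retrieve a => Retrieve (tmap f a)
  end.

Definition rename_name (s : nat) (M : term) (t : term) : term :=
  tmap (fun u => match u with Nm a => if Nat.eqb a s then M else u | _ => u end) t.

Definition subst_t := list (nat * term).
Definition dom (σ : subst_t) : list nat := map fst σ.
Definition ran (σ : subst_t) : list term := map snd σ.
Definition lookup (σ : subst_t) (x : nat) : option term :=
  match find (fun b => Nat.eqb (fst b) x) σ with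
  | Some (_, v) => Some v
  | None => None
  end.
Definition subst (σ : subst_t) (t : term) : term :=
  tmap (fun u => match u with
                 | Var x => match lookup σ x with Some v => v | None => u end
                 | _ => u end) t.

Definition closed (t : term) : Prop := forall p x, subterm_at t p <> Some (Var x).

(* A frame nu n~. sigma: sigma has pairwise distinct domain variables and
   ground range terms (hence it is trivially acyclic). *)
Definition frame_subst (σ : subst_t) : Prop :=
  NoDup (dom σ) /\ forall v, In v (ran σ) -> closed v.

Definition occurs_name (a : nat) (t : term) : Prop :=
  exists p, subterm_at t p = Some (Nm a).

Definition public (ns : list nat) (t : term) : Prop :=
  (forall a, In a ns -> ~ occurs_name a t) /\
  (forall p u, subterm_at t p <> Some (Priv u)).

Definition app_not_priv (t : term) : Prop :=
  match t with Var _ | Nm _ | Priv _ => False | _ => True end.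

Inductive ded (ns : list nat) (σ : subst_t) : term -> Prop :=
| ded_var x : In x (dom σ) -> ded ns σ (subst σ (Var x))
| ded_name a : ~ In a ns -> ded ns σ (Nm a)
| ded_app t : app_not_priv t -> (forall c, In c (children t) -> ded ns σ c) -> ded ns σ t
| ded_eq t t' : ded ns σ t -> eqE t t' -> ded ns σ t'.

Definition is_enc (u : term) : Prop :=
  match u with Enc _ _ _ | Enca _ _ _ => True | _ => False end.

Definition agent_enc (m : list nat) (U : term) (q : list nat) : Prop :=
  exists a, subterm_at U (q ++ [3]) = Some (Nm a) /\ In a m.

Definition prob_enc (S : list term) (U : term) (q : list nat) : Prop :=
  forall V p, In V S -> subterm_at V p = subterm_at U (q ++ [3]) ->
    exists q', p = q' ++ [3] /\ subterm_at V q' = subterm_at U q.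

Definition is_destructor (u : term) : Prop :=
  match u with
  | Pi1 _ | Pi2 _ | Dec _ _ | Deca _ _ | Check _ _ _ | Retrieve _ => True
  | _ => False end.

Definition keys_free_of (s : nat) (u : term) : Prop :=
  match u with
  | Enc _ k r | Enca _ k r => ~ occurs_name s k /\ ~ occurs_name s r
  | Sign _ v => ~ occurs_name s v
  | Pub w | Priv w => ~ occurs_name s w
  | _ => True
  end.

Definition well_formed (ns : list nat) (σ : subst_t) (s : nat) : Prop :=
  (forall V q u, In V (ran σ) -> subterm_at V q = Some u -> is_enc u ->
     agent_enc (remove Nat.eq_dec s ns) V q /\ prob_enc (ran σ) V q) /\
  (forall V q u, In V (ran σ) -> subterm_at V q = Some u -> keys_free_of s u) /\
  (forall V q u, In V (ran σ) -> subterm_at V q = Some u -> ~ is_destructor u).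

(* A rewrite step of [U σ [s/M]] contracts a destructor redex. The redex is not
   inside [M], which is in normal form, nor inside a frame entry, which contains no
   destructor; so it sits at a destructor of [U], and its arguments are instances of
   subterms of [U] or frame entries. On such terms the renaming [s |-> M] is
   injective: [s] only occurs below frame encryptions, and these keep their nonce, a
   restricted agent name distinct from [s] that identifies them (well-formedness).
   Hence the equalities required by the redex already hold before the renaming and
   [U σ] makes the same step. If the reduct is extracted from a frame entry, it is
   deducible; it is added to the frame under a fresh variable, which preserves
   well-formedness and the set of deducible terms. *)

From Stdlib Require Import List Arith Lia Relations Classical.
Import ListNotations.

Definition leaf (t : term) : Prop :=
  match t with Var _ | Nm _ | Cst _ => True | _ => False end.

Lemma leaf_dec t : leaf t \/ ~ leaf t.
Proof. destruct t; simpl; tauto. Qed.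

Lemma leaf_children t : leaf t -> children t = [].
Proof. destruct t; simpl; tauto. Qed.

Lemma rebuild_children t : rebuild t (children t) = t.
Proof. destruct t; reflexivity. Qed.

Lemma children_rebuild t L : length L = length (children t) -> children (rebuild t L) = L.
Proof.
  destruct t; simpl; intro H;
    repeat (destruct L as [|? L]; simpl in H; try discriminate); reflexivity.
Qed.

Lemma rebuild_rebuild t L L' : rebuild (rebuild t L) L' = rebuild t L'.
Proof. destruct t; reflexivity. Qed.

Lemma rebuild_not_leaf t L : ~ leaf t -> ~ leaf (rebuild t L).
Proof. destruct t; simpl; tauto. Qed.

Lemma term_children_ind (P : term -> Prop) :
  (forall t, (forall c, In c (children t) -> P c) -> P t) -> forall t, P t.
Proof.
  intros H t; induction t; apply H; simpl; intros c0 Hc;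
    repeat (destruct Hc as [Hc|Hc]; [subst; assumption|]); contradiction.
Qed.

Lemma tmap_leaf f t : leaf t -> tmap f t = f t.
Proof. destruct t; simpl; tauto. Qed.

Lemma tmap_not_leaf f t : ~ leaf t -> tmap f t = rebuild t (map (tmap f) (children t)).
Proof. destruct t; simpl; tauto || reflexivity. Qed.

Lemma children_tmap f t : ~ leaf t -> children (tmap f t) = map (tmap f) (children t).
Proof. destruct t; simpl; tauto || reflexivity. Qed.

Lemma rebuild_tmap f t L : ~ leaf t -> rebuild (tmap f t) L = rebuild t L.
Proof. destruct t; simpl; tauto || reflexivity. Qed.

Lemma not_leaf_tmap f t : ~ leaf t -> ~ leaf (tmap f t).
Proof. destruct t; simpl; tauto. Qed.

Lemma tmap_ext f g t :
  (forall q l, subterm_at t q = Some l -> leaf l -> f l = g l) -> tmap f t = tmap g t.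
Proof.
  induction t; intro H; simpl;
    try (apply (H []); [reflexivity|exact I]);
    f_equal;
    match goal with IH : (forall q l, subterm_at ?a q = Some l -> leaf l -> _) -> _ |- _ =>
      apply IH end;
    intros q l Hq Hl;
    first [exact (H (1 :: q) l Hq Hl) | exact (H (2 :: q) l Hq Hl) | exact (H (3 :: q) l Hq Hl)].
Qed.

Lemma tmap_id t : tmap (fun u => u) t = t.
Proof. induction t; simpl; congruence. Qed.

Lemma nth_error_app_cons_other (l1 l2 : list term) x y k : k <> length l1 ->
  nth_error (l1 ++ x :: l2) k = nth_error (l1 ++ y :: l2) k.
Proof.
  intro H. rewrite !nth_error_app. destruct (Nat.ltb k (length l1)) eqn:Hlt; [reflexivity|].
  apply Nat.ltb_ge in Hlt. destruct (k - length l1) eqn:E; [lia|reflexivity].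
Qed.

Lemma map_inj_on {X Y} (f : X -> Y) l1 : forall l2,
  (forall a b, In a l1 -> In b l2 -> f a = f b -> a = b) -> map f l1 = map f l2 -> l1 = l2.
Proof.
  induction l1 as [|a l1 IH]; intros [|b l2] H E; simpl in E; try discriminate; [reflexivity|].
  injection E as E1 E2. f_equal; [apply H; simpl; auto|].
  apply IH; [|exact E2]. intros a' b' Ha' Hb'. apply H; simpl; auto.
Qed.

Lemma subterm_at_app t p q :
  subterm_at t (p ++ q) = match subterm_at t p with Some u => subterm_at u q | None => None end.
Proof.
  revert t; induction p as [|i p IH]; intro t; simpl; [reflexivity|].
  destruct i; [reflexivity|].
  destruct (nth_error (children t) i); [apply IH|reflexivity].
Qed.

Lemma subterm_at_app_some t p q u :
  subterm_at t p = Some u -> subterm_at t (p ++ q) = subterm_at u q.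
Proof. intro H. rewrite subterm_at_app, H. reflexivity. Qed.

Lemma subterm_at_leaf t p u : leaf t -> subterm_at t p = Some u -> p = [] /\ u = t.
Proof.
  intros Hl H. destruct p as [|[|i] p]; simpl in H; [inversion H; auto|discriminate|].
  rewrite leaf_children in H by exact Hl. destruct i; discriminate.
Qed.

Lemma subterm_at_cons_not_leaf t j p u : subterm_at t (S j :: p) = Some u -> ~ leaf t.
Proof.
  intros H Hl. simpl in H. rewrite leaf_children in H by exact Hl. destruct j; discriminate.
Qed.

Lemma subterm_at_child t j c : nth_error (children t) j = Some c -> subterm_at t [S j] = Some c.
Proof. intro E. simpl. rewrite E. reflexivity. Qed.

Lemma subterm_at_tmap f t q u :
  subterm_at t q = Some u -> subterm_at (tmap f t) q = Some (tmap f u).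
Proof.
  revert t; induction q as [|[|i] q IH]; intros t H; simpl in *; try congruence.
  assert (NL : ~ leaf t) by (eapply subterm_at_cons_not_leaf; exact H).
  destruct (nth_error (children t) i) eqn:E; [|discriminate].
  rewrite children_tmap, nth_error_map, E by exact NL. apply IH, H.
Qed.

Lemma subterm_at_subst τ t q u :
  subterm_at t q = Some u -> subterm_at (subst τ t) q = Some (subst τ u).
Proof. apply subterm_at_tmap. Qed.

Lemma subterm_at_tmap_inv f t q u : subterm_at (tmap f t) q = Some u ->
  (exists q1 q2 l, q = q1 ++ q2 /\ subterm_at t q1 = Some l /\ leaf l /\
                   subterm_at (f l) q2 = Some u) \/
  (exists u0, subterm_at t q = Some u0 /\ ~ leaf u0 /\ u = tmap f u0).
Proof.
  revert t; induction q as [|i q IH]; intros t H.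
  - simpl in H. inversion H; subst. destruct (leaf_dec t) as [Hl|Hl].
    + left. exists [], [], t. rewrite tmap_leaf by exact Hl. auto.
    + right. exists t. auto.
  - destruct (leaf_dec t) as [Hl|Hl].
    + left. exists [], (i :: q), t. rewrite tmap_leaf in H by exact Hl. auto.
    + destruct i; [discriminate|]. simpl in H.
      rewrite children_tmap, nth_error_map in H by exact Hl.
      destruct (nth_error (children t) i) eqn:E; simpl in H; [|discriminate].
      destruct (IH _ H) as [(q1 & q2 & l & -> & E2 & E3 & E4)|(u0 & E1 & E2 & E3)].
      * left. exists (S i :: q1), q2, l. simpl. rewrite E. auto.
      * right. exists u0. simpl. rewrite E. auto.
Qed.

Definition replace_nth (j : nat) (x : term) (l : list term) : list term :=
  firstn j l ++ x :: skipn (S j) l.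

Lemma replace_nth_split j l c x : nth_error l j = Some c ->
  exists l1 l2, l = l1 ++ c :: l2 /\ length l1 = j /\ replace_nth j x l = l1 ++ x :: l2.
Proof.
  revert j; induction l as [|a l IH]; intros [|j] H; simpl in H; try discriminate.
  - inversion H; subst. exists [], l. auto.
  - destruct (IH j H) as (l1 & l2 & -> & <- & E3). exists (a :: l1), l2.
    split; [reflexivity|]. split; [reflexivity|].
    change (a :: replace_nth (length l1) x (l1 ++ c :: l2) = a :: l1 ++ x :: l2).
    rewrite E3. reflexivity.
Qed.

Lemma length_replace_nth j x l c : nth_error l j = Some c -> length (replace_nth j x l) = length l.
Proof.
  intro H. destruct (replace_nth_split j l c x H) as (l1 & l2 & -> & _ & ->).
  rewrite !length_app. reflexivity.
Qed.

Lemma replace_at_cons t j p r : replace_at t (S j :: p) r =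
  match nth_error (children t) j with
  | Some c => rebuild t (replace_nth j (replace_at c p r) (children t))
  | None => t
  end.
Proof. reflexivity. Qed.

Lemma tmap_replace_at f t p r u : subterm_at t p = Some u ->
  tmap f (replace_at t p r) = replace_at (tmap f t) p (tmap f r).
Proof.
  revert t; induction p as [|[|i] p IH]; intros t H; [reflexivity|discriminate|].
  assert (NL : ~ leaf t) by (eapply subterm_at_cons_not_leaf; exact H).
  simpl in H. destruct (nth_error (children t) i) eqn:E; [|discriminate].
  rewrite !replace_at_cons, E, children_tmap, nth_error_map, E by exact NL. simpl.
  rewrite rebuild_tmap, (tmap_not_leaf f (rebuild _ _)) by auto using rebuild_not_leaf.
  rewrite children_rebuild by (eapply length_replace_nth; eauto).
  rewrite rebuild_rebuild. f_equal.
  unfold replace_nth. rewrite map_app. cbn [map]. rewrite firstn_map, skipn_map, (IH _ H).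
  reflexivity.
Qed.

Lemma subst_replace_at τ t p r u : subterm_at t p = Some u ->
  subst τ (replace_at t p r) = replace_at (subst τ t) p (subst τ r).
Proof. apply tmap_replace_at. Qed.

Definition everywhere (P : term -> Prop) (t : term) : Prop :=
  forall q u, subterm_at t q = Some u -> P u.

Lemma everywhere_root P t : everywhere P t -> P t.
Proof. intro H. apply (H []). reflexivity. Qed.

Lemma everywhere_subterm P t q u : everywhere P t -> subterm_at t q = Some u -> everywhere P u.
Proof.
  intros H Hq q' v Hv. apply (H (q ++ q')). rewrite (subterm_at_app_some _ _ _ _ Hq). exact Hv.
Qed.

Lemma everywhere_child P t j c :
  everywhere P t -> nth_error (children t) j = Some c -> everywhere P c.
Proof. intros H E. eapply everywhere_subterm; [exact H|]. apply subterm_at_child, E. Qed.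

Lemma everywhere_leaf (P : term -> Prop) t : leaf t -> P t -> everywhere P t.
Proof.
  intros Hl H q u Hq. apply subterm_at_leaf in Hq; [|exact Hl]. destruct Hq as [_ ->]. exact H.
Qed.

Lemma everywhere_impl (P Q : term -> Prop) t :
  (forall u, P u -> Q u) -> everywhere P t -> everywhere Q t.
Proof. intros H1 H2 q u Hq. apply H1. eapply H2; eauto. Qed.

Lemma everywhere_replace_at P (HP : forall t L, ~ leaf t -> P t -> P (rebuild t L)) t p w u :
  subterm_at t p = Some u -> everywhere P t -> everywhere P w -> everywhere P (replace_at t p w).
Proof.
  revert t; induction p as [|[|i] p IH]; intros t H Ht Hw; [exact Hw|discriminate|].
  assert (NL : ~ leaf t) by (eapply subterm_at_cons_not_leaf; exact H).
  simpl in H. destruct (nth_error (children t) i) as [c|] eqn:E; [|discriminate].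
  rewrite replace_at_cons, E.
  destruct (replace_nth_split i (children t) c (replace_at c p w) E) as (l1 & l2 & E1 & E2 & ->).
  intros [|[|k] q] v Hq; simpl in Hq; [|discriminate|].
  - inversion Hq; subst. apply HP; [exact NL|]. apply everywhere_root, Ht.
  - rewrite children_rebuild in Hq by (rewrite E1, !length_app; reflexivity).
    destruct (Nat.eq_dec k i) as [->|Hki].
    + rewrite nth_error_app2 in Hq by lia. rewrite <- E2, Nat.sub_diag in Hq.
      exact (IH c H (everywhere_child _ _ _ _ Ht E) Hw q v Hq).
    + rewrite (nth_error_app_cons_other _ _ _ c), <- E1 in Hq by lia.
      destruct (nth_error (children t) k) eqn:E4; [|discriminate].
      exact (everywhere_child _ _ _ _ Ht E4 q v Hq).
Qed.

Definition public_symbol (ns : list nat) (u : term) : Prop :=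
  match u with Nm a => ~ In a ns | Priv _ => False | _ => True end.

Lemma public_everywhere ns t : everywhere (public_symbol ns) t -> public ns t.
Proof.
  intro H. split; [intros a Ha [p Hp]; exact (H _ _ Hp Ha)|intros p u Hp; exact (H _ _ Hp)].
Qed.

Lemma public_symbol_rebuild ns t L :
  ~ leaf t -> public_symbol ns t -> public_symbol ns (rebuild t L).
Proof. destruct t; simpl; tauto. Qed.

Lemma lookup_cons b l x :
  lookup (b :: l) x = if Nat.eqb (fst b) x then Some (snd b) else lookup l x.
Proof. unfold lookup. destruct b as [a v]. simpl. destruct (Nat.eqb a x); reflexivity. Qed.

Lemma lookup_dom l x : In x (dom l) -> exists v, lookup l x = Some v /\ In v (ran l).
Proof.
  induction l as [|[a v] l IH]; simpl; intro H; [contradiction|].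
  rewrite lookup_cons. simpl. destruct (Nat.eqb a x) eqn:E; [exists v; auto|].
  destruct H as [->|H]; [rewrite Nat.eqb_refl in E; discriminate|].
  destruct (IH H) as (w & E1 & E2). exists w. auto.
Qed.

Lemma lookup_In l x v : NoDup (dom l) -> In (x, v) l -> lookup l x = Some v.
Proof.
  induction l as [|[a w] l IH]; simpl; intros H1 H2; [contradiction|].
  inversion H1 as [|? ? Ha Hl]; subst. rewrite lookup_cons. simpl.
  destruct H2 as [H2|H2]; [inversion H2; subst; rewrite Nat.eqb_refl; reflexivity|].
  destruct (Nat.eqb a x) eqn:E; [|auto].
  apply Nat.eqb_eq in E. subst. exfalso. apply Ha, (in_map fst _ _ H2).
Qed.

Lemma lookup_app_l l l' x : In x (dom l) -> lookup (l ++ l') x = lookup l x.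
Proof.
  induction l as [|[a w] l IH]; simpl; intro H; [contradiction|].
  rewrite !lookup_cons. simpl. destruct (Nat.eqb a x) eqn:E; [reflexivity|].
  destruct H as [->|H]; [rewrite Nat.eqb_refl in E; discriminate|auto].
Qed.

Lemma lookup_app_r l l' x : ~ In x (dom l) -> lookup (l ++ l') x = lookup l' x.
Proof.
  induction l as [|[a w] l IH]; simpl; intro H; [reflexivity|].
  rewrite lookup_cons. simpl. destruct (Nat.eqb a x) eqn:E; [|auto].
  apply Nat.eqb_eq in E. subst. tauto.
Qed.

Lemma subst_var_dom σ x : In x (dom σ) -> exists v, subst σ (Var x) = v /\ In v (ran σ).
Proof.
  intro H. destruct (lookup_dom σ x H) as (v & Lv & Iv). exists v.
  unfold subst. simpl. rewrite Lv. auto.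
Qed.

Lemma ran_subst_var σ v : frame_subst σ -> In v (ran σ) ->
  exists x, In x (dom σ) /\ subst σ (Var x) = v.
Proof.
  intros Hfs H. apply in_map_iff in H. destruct H as ([x w] & <- & H).
  exists x. split; [apply (in_map fst _ _ H)|].
  unfold subst. simpl. erewrite lookup_In; eauto. apply Hfs.
Qed.

Lemma fresh_nat (l : list nat) : exists y, ~ In y l.
Proof.
  exists (S (list_max l)). intro H. destruct (list_max_le l (list_max l)) as [H1 _].
  specialize (H1 (le_n _)). rewrite Forall_forall in H1. specialize (H1 _ H). lia.
Qed.

Lemma closed_subterm t o u : closed t -> subterm_at t o = Some u -> closed u.
Proof.
  intros Ht Ho q x Hq. apply (Ht (o ++ q) x). rewrite (subterm_at_app_some _ _ _ _ Ho). exact Hq.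
Qed.

Lemma ded_frame_mono ns σ σ' W :
  (forall x, In x (dom σ) -> ded ns σ' (subst σ (Var x))) -> ded ns σ W -> ded ns σ' W.
Proof.
  intros Hσ H. induction H as [x Hx|a Ha|t Ht _ IH|t t' _ IH Heq].
  - exact (Hσ x Hx).
  - apply ded_name, Ha.
  - apply ded_app; assumption.
  - eapply ded_eq; eassumption.
Qed.

Section FrameExtension.

Variables (σ : subst_t) (y : nat) (r : term).
Hypothesis Hy : ~ In y (dom σ).

Lemma subst_extend_old x : In x (dom σ) -> subst (σ ++ [(y, r)]) (Var x) = subst σ (Var x).
Proof. intro Hx. unfold subst. simpl. rewrite lookup_app_l by exact Hx. reflexivity. Qed.

Lemma subst_extend_new : subst (σ ++ [(y, r)]) (Var y) = r.
Proof.
  unfold subst. simpl. rewrite lookup_app_r, lookup_cons by exact Hy. simpl.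
  rewrite Nat.eqb_refl. reflexivity.
Qed.

Lemma subst_extend t : (forall q x, subterm_at t q = Some (Var x) -> In x (dom σ)) ->
  subst (σ ++ [(y, r)]) t = subst σ t.
Proof.
  intro Ht. apply tmap_ext. intros q [x| | | | | | | | | | | | | |] Hq Hl; try reflexivity.
  apply (subst_extend_old x), (Ht q x Hq).
Qed.

Lemma ded_extend_iff ns : ded ns σ r -> forall W, ded ns σ W <-> ded ns (σ ++ [(y, r)]) W.
Proof.
  intros Hr W. split; apply ded_frame_mono.
  - intros x Hx. rewrite <- subst_extend_old by exact Hx.
    apply ded_var. unfold dom. rewrite map_app. apply in_or_app. auto.
  - intros x Hx. unfold dom in Hx. rewrite map_app in Hx. apply in_app_or in Hx.
    destruct Hx as [Hx|[<-|[]]].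
    + rewrite subst_extend_old by exact Hx. apply ded_var, Hx.
    + simpl. rewrite subst_extend_new. exact Hr.
Qed.

Lemma frame_subst_extend : frame_subst σ -> closed r -> frame_subst (σ ++ [(y, r)]).
Proof.
  intros [Hnd Hcl] Hr. split.
  - unfold dom. rewrite map_app. apply NoDup_app; [exact Hnd|repeat constructor; tauto|].
    intros a Ha [<-|[]]. contradiction.
  - intros w Hw. unfold ran in Hw. rewrite map_app in Hw. apply in_app_or in Hw.
    destruct Hw as [Hw|[<-|[]]]; auto.
Qed.

End FrameExtension.

(* The new range term [r] must not sit at a nonce position of [v]: otherwise the
   nonce [r] would occur in the new frame outside of its encryption. *)
Lemma well_formed_extend ns σ s y v o r :
  well_formed ns σ s -> In v (ran σ) -> subterm_at v o = Some r -> (forall o', o <> o' ++ [3]) ->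
  well_formed ns (σ ++ [(y, r)]) s.
Proof.
  intros (W1 & W2 & W3) Hv Hr Ho.
  assert (Base : forall V, In V (ran (σ ++ [(y, r)])) -> exists B o1, In B (ran σ) /\
            (o1 = [] \/ o1 = o) /\ forall q, subterm_at V q = subterm_at B (o1 ++ q)).
  { intros V HV. unfold ran in HV. rewrite map_app in HV. apply in_app_or in HV.
    destruct HV as [HV|[<-|[]]]; [exists V, []; auto|].
    exists v, o. repeat split; auto.
    intro q. rewrite (subterm_at_app_some _ _ _ _ Hr). reflexivity. }
  split; [|split].
  - intros V q u HV Hq Henc. destruct (Base V HV) as (B & o1 & HB & _ & HVB). rewrite HVB in Hq.
    destruct (W1 B (o1 ++ q) u HB Hq Henc) as [(a & Ha & Hin) Hprob]. split.
    + exists a. rewrite HVB, app_assoc. auto.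
    + intros V2 p HV2 E. destruct (Base V2 HV2) as (B2 & o2 & HB2 & Ho2 & HVB2).
      rewrite HVB2, HVB, app_assoc in E.
      destruct (Hprob B2 (o2 ++ p) HB2 E) as (q'' & F1 & F2).
      destruct p as [|x p'] using rev_ind.
      * exfalso. rewrite app_nil_r in F1. destruct Ho2 as [->| ->].
        -- destruct q''; discriminate.
        -- exact (Ho q'' F1).
      * rewrite app_assoc in F1. apply app_inj_tail in F1. destruct F1 as [F1 ->].
        exists p'. split; [reflexivity|]. rewrite HVB2, HVB, F1. exact F2.
  - intros V q u HV Hq. destruct (Base V HV) as (B & o1 & HB & _ & HVB). rewrite HVB in Hq.
    eapply W2; eauto.
  - intros V q u HV Hq. destruct (Base V HV) as (B & o1 & HB & _ & HVB). rewrite HVB in Hq.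
    eapply W3; eauto.
Qed.

Lemma ded_root_step ns σ l r : app_not_priv l -> (forall c, In c (children l) -> ded ns σ c) ->
  root_step l r -> ded ns σ r.
Proof.
  intros H1 H2 H3. apply ded_eq with l; [apply ded_app; assumption|].
  apply rst_step. exists [], l, r. auto.
Qed.

Lemma single_not_nonce i : i <> 3 -> forall o, [i] <> o ++ [3].
Proof. intros Hi [|a [|b o]] H; simpl in H; injection H; try discriminate; auto. Qed.

Lemma root_step_pi1_inv a r : root_step (Pi1 a) r -> exists z, a = Pair r z.
Proof. intro H. inversion H; subst. eauto. Qed.

Lemma root_step_pi2_inv a r : root_step (Pi2 a) r -> exists z, a = Pair z r.
Proof. intro H. inversion H; subst. eauto. Qed.

Lemma root_step_retrieve_inv a r : root_step (Retrieve a) r -> exists z, a = Sign r z.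
Proof. intro H. inversion H; subst. eauto. Qed.

Lemma root_step_dec_inv a b r : root_step (Dec a b) r -> exists z, a = Enc r b z.
Proof. intro H. inversion H; subst. eauto. Qed.

Lemma root_step_deca_inv a b r : root_step (Deca a b) r ->
  exists z2 z3, a = Enca r (Pub z2) z3 /\ b = Priv z2.
Proof. intro H. inversion H; subst. eauto. Qed.

Lemma root_step_check_inv a b c r : root_step (Check a b c) r ->
  exists z, b = Sign a (Priv z) /\ c = Pub z /\ r = ok.
Proof. intro H. inversion H; subst. eauto. Qed.

Lemma root_step_destructor l r : root_step l r -> is_destructor l.
Proof. intro H. inversion H; simpl; auto. Qed.

Lemma destructor_tmap f u : ~ leaf u -> is_destructor (tmap f u) -> is_destructor u.
Proof. destruct u; simpl; tauto. Qed.

Lemma enc_nonce u : is_enc u -> exists c, subterm_at u [3] = Some c.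
Proof. destruct u; simpl; try tauto; eauto. Qed.

Lemma enc_not_leaf u : is_enc u -> ~ leaf u.
Proof. destruct u; simpl; tauto. Qed.

Lemma is_enc_same_head A B :
  ~ leaf A -> (forall L, rebuild A L = rebuild B L) -> is_enc A -> is_enc B.
Proof. intros NA H HA. rewrite <- (rebuild_children B), <- H. destruct A; simpl in *; tauto. Qed.

Section Secrecy.

Variables (ns : list nat) (σ : subst_t) (s : nat) (M : term).
Hypotheses (Hfs : frame_subst σ) (Hwf : well_formed ns σ s) (Hnd : ~ ded ns σ (Nm s))
  (HMn : normal_form M) (HMp : public ns M).

Notation R := (rename_name s M).
Notation SB := (subst σ).

Definition frame_subterm (t : term) : Prop :=
  exists V e, In V (ran σ) /\ subterm_at V e = Some t.

Definition frame_encryption (u : term) : Prop := is_enc u /\ frame_subterm u.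

Definition secret_guarded (t : term) : Prop :=
  forall e, subterm_at t e = Some (Nm s) ->
    exists q q' u, e = q ++ q' /\ subterm_at t q = Some u /\ frame_encryption u.

Definition nonce_faithful (t : term) : Prop :=
  forall q u, subterm_at t q = Some u -> is_enc u ->
    (exists u', frame_encryption u' /\ subterm_at u' [3] = subterm_at u [3]) ->
    frame_encryption u.

(* The renaming [s |-> M] is injective on matchable terms: [s] only occurs below
   frame encryptions, which survive the renaming and are identified by their
   nonce, an agent name distinct from [s]. *)
Definition matchable (t : term) : Prop := secret_guarded t /\ nonce_faithful t.

Definition admissible_symbol (u : term) : Prop :=
  match u with
  | Var x => In x (dom σ)
  | Nm a => ~ In a ns
  | Priv _ => False
  | _ => True
  end.

Definition admissible : term -> Prop := everywhere admissible_symbol.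

Lemma admissible_child t j c : admissible t -> nth_error (children t) j = Some c -> admissible c.
Proof. apply everywhere_child. Qed.

Lemma admissible_symbol_rebuild t L :
  ~ leaf t -> admissible_symbol t -> admissible_symbol (rebuild t L).
Proof. destruct t; simpl; tauto. Qed.

Lemma admissible_public t : admissible t -> public ns t.
Proof.
  intro H. apply public_everywhere. revert H. apply everywhere_impl. intros []; simpl; tauto.
Qed.

Lemma frame_subterm_subterm t q u : frame_subterm t -> subterm_at t q = Some u -> frame_subterm u.
Proof.
  intros (V & e & H1 & H2) H3. exists V, (e ++ q). split; [exact H1|].
  rewrite (subterm_at_app_some _ _ _ _ H2). exact H3.
Qed.

Lemma frame_subterm_ran V : In V (ran σ) -> frame_subterm V.
Proof. intro H. exists V, []. auto. Qed.

Lemma frame_subterm_child t j c :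
  frame_subterm t -> nth_error (children t) j = Some c -> frame_subterm c.
Proof. intros Ht E. eapply frame_subterm_subterm; [exact Ht|]. apply subterm_at_child, E. Qed.

Lemma frame_subterm_ran_child V j c :
  In V (ran σ) -> nth_error (children V) j = Some c -> frame_subterm c.
Proof. intro HV. apply frame_subterm_child, frame_subterm_ran, HV. Qed.

Lemma frame_subterm_keys_free u : frame_subterm u -> keys_free_of s u.
Proof. intros (V & e & H1 & H2). destruct Hwf as (_ & W2 & _). eapply W2; eauto. Qed.

Lemma frame_subterm_not_destructor u : frame_subterm u -> ~ is_destructor u.
Proof. intros (V & e & H1 & H2). destruct Hwf as (_ & _ & W3). eapply W3; eauto. Qed.

Lemma ded_ran v : In v (ran σ) -> ded ns σ v.
Proof. intro H. destruct (ran_subst_var σ v Hfs H) as (x & H1 & <-). apply ded_var, H1. Qed.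

Lemma secret_restricted : In s ns.
Proof. destruct (classic (In s ns)) as [H|H]; [exact H|]. exfalso. apply Hnd, ded_name, H. Qed.

Lemma rename_fresh t : ~ occurs_name s t -> R t = t.
Proof.
  intro H. unfold rename_name. rewrite <- (tmap_id t) at 2. apply tmap_ext.
  intros q [| a | | | | | | | | | | | | |] Hq Hl; try reflexivity.
  destruct (Nat.eqb a s) eqn:E; [|reflexivity].
  apply Nat.eqb_eq in E. subst. exfalso. apply H. exists q. exact Hq.
Qed.

Lemma rename_leaf c : leaf c -> c <> Nm s -> R c = c.
Proof.
  intros H1 H2. destruct c; simpl in H1; try contradiction; try reflexivity.
  unfold rename_name. simpl. destruct (Nat.eqb a s) eqn:E; [|reflexivity].
  apply Nat.eqb_eq in E. subst. tauto.
Qed.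

Lemma rename_not_leaf t : ~ leaf t -> ~ leaf (R t).
Proof. apply not_leaf_tmap. Qed.

Lemma subterm_at_rename t q u : subterm_at t q = Some u -> subterm_at (R t) q = Some (R u).
Proof. apply subterm_at_tmap. Qed.

Lemma rename_replace_at t p r u : subterm_at t p = Some u ->
  R (replace_at t p r) = replace_at (R t) p (R r).
Proof. apply tmap_replace_at. Qed.

Lemma rebuild_rename t L : ~ leaf t -> rebuild (R t) L = rebuild t L.
Proof. apply rebuild_tmap. Qed.

Lemma children_rename t : ~ leaf t -> children (R t) = map R (children t).
Proof. apply children_tmap. Qed.

Lemma rename_secret : R (Nm s) = M.
Proof. unfold rename_name. simpl. rewrite Nat.eqb_refl. reflexivity. Qed.

Lemma restricted_not_in_M a q : In a ns -> subterm_at M q <> Some (Nm a).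
Proof. intros H1 H2. apply (proj1 HMp a H1). exists q. exact H2. Qed.

Lemma rename_eq_restricted c a : R c = Nm a -> In a ns -> c = Nm a.
Proof.
  intros H Ha. destruct (leaf_dec c) as [Hl|Hl].
  - destruct c; simpl in Hl; try contradiction; unfold rename_name in H; simpl in H;
      try discriminate.
    destruct (Nat.eqb a0 s); [|exact H].
    exfalso. apply (restricted_not_in_M a []); [exact Ha|]. simpl. rewrite H. reflexivity.
  - exfalso. apply (rename_not_leaf c Hl). rewrite H. exact I.
Qed.

Lemma subterm_at_rename_inv t q u : subterm_at (R t) q = Some u ->
  (exists q1 q2, q = q1 ++ q2 /\ subterm_at t q1 = Some (Nm s) /\ subterm_at M q2 = Some u) \/
  (exists u0, subterm_at t q = Some u0 /\ u0 <> Nm s /\ u = R u0).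
Proof.
  intro H. apply subterm_at_tmap_inv in H.
  destruct H as [(q1 & q2 & l & E1 & E2 & E3 & E4)|(u0 & E1 & E2 & E3)].
  - destruct (classic (l = Nm s)) as [->|Hls].
    + left. exists q1, q2. simpl in E4. rewrite Nat.eqb_refl in E4. auto.
    + right. exists l. pose proof (rename_leaf l E3 Hls) as Hrl.
      unfold rename_name in Hrl. rewrite tmap_leaf in Hrl by exact E3. rewrite Hrl in E4.
      apply subterm_at_leaf in E4; [|exact E3]. destruct E4 as [-> ->].
      rewrite E1, app_nil_r. split; [exact E2|]. split; [exact Hls|].
      symmetry. apply rename_leaf; assumption.
  - right. exists u0. split; [exact E1|]. split; [intros ->; exact (E2 I)|exact E3].
Qed.

Lemma ded_frame_child t j c : frame_subterm t -> ded ns σ t ->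
  nth_error (children t) j = Some c -> is_enc t \/ ~ occurs_name s c \/ ded ns σ c.
Proof.
  intros HS Hd E. pose proof (frame_subterm_keys_free t HS) as K.
  pose proof (frame_subterm_not_destructor t HS) as D.
  destruct t; simpl in K, D; try (exfalso; apply D; exact I); try (left; exact I);
    destruct j as [|[|j]]; simpl in E; try discriminate;
    try (destruct j; discriminate); injection E as <-;
    try (right; left; tauto); right; right.
  - apply (ded_root_step _ _ (Pi1 (Pair t1 t2))); [exact I|intros c [<-|[]]; exact Hd|constructor].
  - apply (ded_root_step _ _ (Pi2 (Pair t1 t2))); [exact I|intros c [<-|[]]; exact Hd|constructor].
  - apply (ded_root_step _ _ (Retrieve (Sign t1 t2)));
      [exact I|intros c [<-|[]]; exact Hd|constructor].
Qed.

Lemma frame_deducible_guarded t : frame_subterm t -> ded ns σ t -> secret_guarded t.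
Proof.
  intros HS Hd e. revert t HS Hd. induction e as [|[|j] e IH]; intros t HS Hd He;
    simpl in He; [injection He as ->; contradiction|discriminate|].
  destruct (nth_error (children t) j) as [c|] eqn:E; [|discriminate].
  destruct (ded_frame_child t j c HS Hd E) as [Henc|[Hfree|Hdc]].
  - exists [], (S j :: e), t. repeat split; assumption.
  - exfalso. apply Hfree. exists e. exact He.
  - destruct (IH c (frame_subterm_child t j c HS E) Hdc He) as (q & q' & u & -> & F2 & F3).
    exists (S j :: q), q', u. simpl. rewrite E. auto.
Qed.

Lemma frame_nonce_faithful t : frame_subterm t -> nonce_faithful t.
Proof. intros HS q u Hq Hu _. split; [exact Hu|]. eapply frame_subterm_subterm; eassumption. Qed.

Lemma matchable_frame_fresh t : frame_subterm t -> ~ occurs_name s t -> matchable t.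
Proof.
  intros HS Hf. split; [|apply frame_nonce_faithful, HS].
  intros e He. exfalso. apply Hf. exists e. exact He.
Qed.

Lemma matchable_frame_deducible t : frame_subterm t -> ded ns σ t -> matchable t.
Proof.
  intros HS Hd. split; [apply frame_deducible_guarded|apply frame_nonce_faithful]; assumption.
Qed.

Lemma frame_encryption_nonce u : frame_encryption u ->
  exists a, subterm_at u [3] = Some (Nm a) /\ In a ns /\ a <> s /\ ~ In (Nm a) (ran σ).
Proof.
  intros [Hu (V & e & HV & He)]. destruct Hwf as (W1 & _ & _).
  destruct (W1 V e u HV He Hu) as [(a & Ha & Hin) Hprob].
  rewrite (subterm_at_app_some _ _ _ _ He) in Ha. apply in_remove in Hin.
  exists a. repeat split; try tauto. intro Hran.
  destruct (Hprob (Nm a) [] Hran) as ([|? ?] & F & _);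
    [rewrite (subterm_at_app_some _ _ _ _ He), Ha; reflexivity|discriminate..].
Qed.

Lemma frame_encryption_nonce_inj u1 u2 : frame_encryption u1 -> frame_encryption u2 ->
  subterm_at u1 [3] = subterm_at u2 [3] -> u1 = u2.
Proof.
  intros [Hu1 (V1 & e1 & HV1 & He1)] [_ (V2 & e2 & HV2 & He2)] E.
  destruct Hwf as (W1 & _ & _). destruct (W1 V1 e1 u1 HV1 He1 Hu1) as [_ Hprob].
  destruct (Hprob V2 (e2 ++ [3]) HV2) as (q' & F1 & F2).
  - rewrite (subterm_at_app_some _ _ _ _ He1), (subterm_at_app_some _ _ _ _ He2). congruence.
  - apply app_inj_tail in F1. destruct F1 as [<- _]. congruence.
Qed.

Lemma subterm_at_instance_inv W q u : admissible W -> subterm_at (SB W) q = Some u ->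
  (exists q1 q2 v, q = q1 ++ q2 /\ subterm_at (SB W) q1 = Some v /\ In v (ran σ) /\
                   subterm_at v q2 = Some u) \/
  (exists u0, subterm_at W q = Some u0 /\ (forall x, u0 <> Var x) /\ u = SB u0).
Proof.
  intros HW H. apply subterm_at_tmap_inv in H.
  destruct H as [(q1 & q2 & l & -> & E2 & E3 & E4)|(u0 & E1 & E2 & ->)].
  - destruct l as [x|a|c| | | | | | | | | | | |]; try contradiction.
    + left. destruct (subst_var_dom σ x (HW _ _ E2)) as (v & Ev & Iv).
      change (subterm_at (SB (Var x)) q2 = Some u) in E4. rewrite Ev in E4.
      exists q1, q2, v. repeat split; [|assumption..].
      rewrite <- Ev. apply (subterm_at_tmap _ _ _ _ E2).
    + right. apply subterm_at_leaf in E4; [|exact I]. destruct E4 as [-> ->].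
      exists (Nm a). rewrite app_nil_r. repeat split; [exact E2|discriminate].
    + right. apply subterm_at_leaf in E4; [|exact I]. destruct E4 as [-> ->].
      exists (Cst c). rewrite app_nil_r. repeat split; [exact E2|discriminate].
  - right. exists u0. repeat split; [exact E1|]. intros x ->. exact (E2 I).
Qed.

Lemma instance_restricted_name W a : admissible W -> SB W = Nm a -> In a ns -> In (Nm a) (ran σ).
Proof.
  intros HW E Ha. pose proof (everywhere_root _ _ HW) as HQ.
  destruct W; try discriminate; simpl in HQ.
  - destruct (subst_var_dom σ x HQ) as (v & Ev & Iv). congruence.
  - injection E as ->. contradiction.
Qed.

Lemma ded_instance W : admissible W -> ded ns σ (SB W).
Proof.
  induction W as [W IH] using term_children_ind. intro HW.
  pose proof (everywhere_root _ _ HW) as HQ.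
  destruct (leaf_dec W) as [Hl|Hl].
  - destruct W; simpl in Hl; try contradiction.
    + apply ded_var, HQ.
    + apply ded_name, HQ.
    + apply ded_app; [exact I|]. simpl. tauto.
  - unfold subst. rewrite tmap_not_leaf by exact Hl. apply ded_app.
    + destruct W; simpl in *; tauto.
    + rewrite children_rebuild by (rewrite length_map; reflexivity).
      intros c Hc. apply in_map_iff in Hc. destruct Hc as (c0 & <- & Hc0).
      apply IH; [exact Hc0|]. destruct (In_nth_error _ _ Hc0) as (j & E).
      eapply everywhere_child; eassumption.
Qed.

Lemma matchable_instance W : admissible W -> matchable (SB W).
Proof.
  intro HW. split.
  - intros e He. apply (subterm_at_instance_inv W e _ HW) in He.
    destruct He as [(q1 & q2 & v & -> & E2 & E3 & E4)|(u0 & E1 & _ & E3)].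
    + destruct (frame_deducible_guarded v (frame_subterm_ran v E3) (ded_ran v E3) q2 E4)
        as (q & q' & u & -> & F2 & F3).
      exists (q1 ++ q), q', u. rewrite app_assoc, (subterm_at_app_some _ _ _ _ E2). auto.
    + exfalso. apply Hnd, ded_ran.
      apply (instance_restricted_name u0); [eapply everywhere_subterm; eassumption|auto|].
      apply secret_restricted.
  - intros q u Hq Henc (u' & Hu' & E). apply (subterm_at_instance_inv W q _ HW) in Hq.
    destruct Hq as [(q1 & q2 & v & -> & E2 & E3 & E4)|(u0 & E1 & Hu0 & ->)].
    + split; [exact Henc|]. eapply frame_subterm_subterm; [apply frame_subterm_ran, E3|exact E4].
    + (* The shared nonce would be a restricted name, which neither occurs in [W] nor
         is a frame entry. *)
      exfalso. destruct (frame_encryption_nonce u' Hu') as (a & Ha & Hin & _ & Hran).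
      destruct u0; try (exact (Hu0 _ eq_refl)); simpl in Henc; try contradiction;
        rewrite Ha in E; simpl in E; injection E as E; apply Hran;
        apply (instance_restricted_name u0_3); auto;
        apply (everywhere_subterm _ _ _ _ HW) in E1; exact (everywhere_child _ _ 2 _ E1 eq_refl).
Qed.

Lemma rename_frame_encryption_inj A B : frame_encryption A -> matchable B -> R A = R B -> A = B.
Proof.
  intros HA [_ FB] E. destruct (frame_encryption_nonce A HA) as (a & Ha & Hin & Has & _).
  assert (RA3 : subterm_at (R A) [3] = Some (Nm a)).
  { rewrite (subterm_at_rename _ _ _ Ha). f_equal. apply rename_leaf; [exact I|congruence]. }
  assert (LA : ~ leaf A) by (apply enc_not_leaf, HA).
  destruct (leaf_dec B) as [LB|LB].
  - exfalso. destruct (classic (B = Nm s)) as [->|HB].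
    + rewrite rename_secret in E. rewrite E in RA3. exact (restricted_not_in_M a [3] Hin RA3).
    + rewrite (rename_leaf B LB HB) in E. apply (rename_not_leaf A LA). rewrite E. exact LB.
  - assert (HR : forall L, rebuild A L = rebuild B L).
    { intro L. rewrite <- (rebuild_rename A L LA), <- (rebuild_rename B L LB), E. reflexivity. }
    assert (HeB : is_enc B) by exact (is_enc_same_head A B LA HR (proj1 HA)).
    destruct (enc_nonce B HeB) as (cB & HcB).
    pose proof (subterm_at_rename _ _ _ HcB) as RB3. rewrite <- E, RA3 in RB3.
    injection RB3 as RB3. symmetry in RB3. apply rename_eq_restricted in RB3; [subst cB|exact Hin].
    apply frame_encryption_nonce_inj; [exact HA| |congruence].
    apply (FB [] B eq_refl HeB). exists A. split; [exact HA|congruence].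
Qed.

Lemma matchable_child t j c :
  matchable t -> ~ frame_encryption t -> nth_error (children t) j = Some c -> matchable c.
Proof.
  intros [G F] NE E. split.
  - intros e He. destruct (G (S j :: e)) as ([|k q] & q' & u & F1 & F2 & F3).
    + simpl. rewrite E. exact He.
    + simpl in F2. injection F2 as <-. contradiction.
    + simpl in F1. injection F1 as <- ->. simpl in F2. rewrite E in F2. exists q, q', u. auto.
  - intros q u Hq. apply (F (S j :: q)). simpl. rewrite E. exact Hq.
Qed.

Lemma matchable_not_secret t : matchable t -> t <> Nm s.
Proof.
  intros [G _] Ht. subst t. destruct (G [] eq_refl) as (q & q' & u & _ & F2 & [Hu _]).
  apply subterm_at_leaf in F2; [|exact I]. destruct F2 as [_ ->]. exact Hu.
Qed.

Lemma rename_inj_matchable A : forall B, matchable A -> matchable B -> R A = R B -> A = B.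
Proof.
  induction A as [A IH] using term_children_ind. intros B GA GB E.
  destruct (classic (frame_encryption A)) as [HA|HA];
    [apply rename_frame_encryption_inj; assumption|].
  destruct (classic (frame_encryption B)) as [HB|HB];
    [symmetry; apply rename_frame_encryption_inj; auto|].
  pose proof (matchable_not_secret A GA). pose proof (matchable_not_secret B GB).
  destruct (leaf_dec A) as [LA|LA]; destruct (leaf_dec B) as [LB|LB].
  - rewrite !rename_leaf in E; auto.
  - exfalso. rewrite (rename_leaf A) in E by auto.
    apply (rename_not_leaf B LB). rewrite <- E. exact LA.
  - exfalso. rewrite (rename_leaf B) in E by auto.
    apply (rename_not_leaf A LA). rewrite E. exact LB.
  - assert (HC : children A = children B).
    { apply (map_inj_on R).
      - intros a b Ha Hb Eab. destruct (In_nth_error _ _ Ha) as (j & Ej).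
        destruct (In_nth_error _ _ Hb) as (k & Ek).
        exact (IH a Ha b (matchable_child A j a GA HA Ej) (matchable_child B k b GB HB Ek) Eab).
      - rewrite <- !children_rename by assumption. rewrite E. reflexivity. }
    rewrite <- (rebuild_children A), <- (rebuild_children B), HC.
    rewrite <- (rebuild_rename A _ LA), <- (rebuild_rename B _ LB), E. reflexivity.
Qed.

(* A variable bound to [s] would be renamed to the possibly compound [M]; this is
   excluded because [s] is not deducible. *)
Lemma instance_not_leaf_cases X : admissible X -> ~ leaf (R (SB X)) ->
  ~ leaf X \/ exists v, In v (ran σ) /\ SB X = v /\ ~ leaf v.
Proof.
  intros HX NL. destruct (leaf_dec X) as [LX|LX]; [right|left; exact LX].
  pose proof (everywhere_root _ _ HX) as HQ.
  destruct X; simpl in LX, HQ; try contradiction.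
  - destruct (subst_var_dom σ x HQ) as (v & Ev & Iv). exists v. repeat split; [exact Iv|exact Ev|].
    intro Lv. destruct (classic (v = Nm s)) as [->|Hv].
    + apply Hnd. rewrite <- Ev. apply ded_var, HQ.
    + apply NL. rewrite Ev, rename_leaf by assumption. exact Lv.
  - exfalso. apply NL. change (SB (Nm a)) with (Nm a). rewrite rename_leaf; [exact I|exact I|].
    intro E. injection E as ->. exact (HQ secret_restricted).
Qed.

Lemma instance_priv Y z : admissible Y -> R (SB Y) = Priv z ->
  exists w, SB Y = Priv w /\ frame_subterm w /\ ~ occurs_name s w /\ z = w.
Proof.
  intros HY E. destruct (instance_not_leaf_cases Y HY) as [LY|(v & Hv & Ev & Lv)];
    [rewrite E; simpl; tauto| |].
  - exfalso. destruct Y; try (apply LY; exact I); simpl in E; try discriminate.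
    exact (everywhere_root _ _ HY).
  - rewrite Ev in E. destruct v; try (exfalso; apply Lv; exact I); simpl in E; try discriminate.
    injection E as <-. pose proof (frame_subterm_keys_free _ (frame_subterm_ran _ Hv)) as K.
    exists v. repeat split; [exact Ev|exact (frame_subterm_ran_child _ 0 _ Hv eq_refl)|exact K|].
    exact (rename_fresh v K).
Qed.

Lemma instance_pub Z w : admissible Z -> R (SB Z) = Pub w -> frame_subterm w -> ~ occurs_name s w ->
  SB Z = Pub w.
Proof.
  intros HZ E Sw Fw. destruct (instance_not_leaf_cases Z HZ) as [LZ|(v & Hv & Ev & Lv)];
    [rewrite E; simpl; tauto| |].
  - destruct Z; try (exfalso; apply LZ; exact I); simpl in E; try discriminate.
    injection E as E. change (R (SB Z) = w) in E. change (Pub (SB Z) = Pub w). f_equal.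
    apply rename_inj_matchable.
    + apply matchable_instance, (admissible_child (Pub Z) 0); auto.
    + apply matchable_frame_fresh; assumption.
    + rewrite (rename_fresh w Fw). exact E.
  - rewrite Ev in E |- *.
    destruct v; try (exfalso; apply Lv; exact I); simpl in E; try discriminate.
    injection E as E. change (R v = w) in E.
    pose proof (frame_subterm_keys_free _ (frame_subterm_ran _ Hv)) as K.
    rewrite rename_fresh in E by exact K. subst. reflexivity.
Qed.

Definition lifted_step (U V : term) : Prop :=
  exists σ' : subst_t,
    frame_subst σ' /\ well_formed ns σ' s /\
    (forall x, In x (dom σ) -> subst σ' (Var x) = SB (Var x)) /\
    (forall W, ded ns σ W <-> ded ns σ' W) /\
    exists V', public ns V' /\ V = R (subst σ' V') /\ step (SB U) (subst σ' V').

Lemma redex_in_pattern U p l r : admissible U -> subterm_at (R (SB U)) p = Some l ->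
  root_step l r -> exists u0, subterm_at U p = Some u0 /\ ~ leaf u0 /\ l = R (SB u0).
Proof.
  intros HU Hl Hr. pose proof (root_step_destructor _ _ Hr) as HD.
  apply subterm_at_rename_inv in Hl.
  destruct Hl as [(q1 & q2 & _ & _ & E3)|(u1 & E1 & E2 & ->)].
  - exfalso. apply (HMn (replace_at M q2 r)). exists q2, l, r. auto.
  - assert (NL1 : ~ leaf u1).
    { intro Hl1. rewrite rename_leaf in HD by assumption. destruct u1; simpl in *; tauto. }
    apply (destructor_tmap _ _ NL1) in HD.
    apply (subterm_at_instance_inv U p u1 HU) in E1.
    destruct E1 as [(q1 & q2 & v & _ & _ & Hv & Hu1)|(u0 & F1 & Hu0 & ->)].
    + exfalso. apply (frame_subterm_not_destructor u1); [|exact HD].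
      eapply frame_subterm_subterm; [apply frame_subterm_ran, Hv|exact Hu1].
    + exists u0. split; [exact F1|]. split; [|reflexivity].
      intro Hl0. destruct u0; simpl in *; try tauto. exact (Hu0 _ eq_refl).
Qed.

Lemma lifted_step_same_frame U p u0 W : admissible U -> subterm_at U p = Some u0 ->
  admissible W -> root_step (SB u0) (SB W) -> lifted_step U (replace_at (R (SB U)) p (R (SB W))).
Proof.
  intros HU Hp HW Hst. exists σ. split; [exact Hfs|]. split; [exact Hwf|].
  split; [reflexivity|]. split; [tauto|].
  exists (replace_at U p W). split; [|split].
  - apply admissible_public, (everywhere_replace_at _ admissible_symbol_rebuild U p W u0);
      assumption.
  - rewrite (subst_replace_at σ U p W u0 Hp).
    rewrite (rename_replace_at _ p _ _ (subterm_at_subst σ _ _ _ Hp)). reflexivity.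
  - exists p, (SB u0), (SB W). split; [apply subterm_at_subst, Hp|]. split; [exact Hst|].
    apply (subst_replace_at σ U p W u0 Hp).
Qed.

(* [r0] enters the frame under a fresh variable [y], and [Var y] replaces the redex
   in [U]. *)
Lemma lifted_step_extend_frame U p u0 v o r0 : admissible U -> subterm_at U p = Some u0 ->
  In v (ran σ) -> subterm_at v o = Some r0 -> (forall o', o <> o' ++ [3]) -> ded ns σ r0 ->
  root_step (SB u0) r0 -> lifted_step U (replace_at (R (SB U)) p (R r0)).
Proof.
  intros HU Hp Hv Hr0 Ho Hd Hst. destruct (fresh_nat (dom σ)) as [y Hy].
  exists (σ ++ [(y, r0)]). split; [|split; [|split; [|split]]].
  - apply frame_subst_extend; [exact Hy|exact Hfs|].
    apply (closed_subterm v o); [apply (proj2 Hfs), Hv|exact Hr0].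
  - eapply well_formed_extend; eassumption.
  - intros x Hx. apply subst_extend_old; assumption.
  - apply ded_extend_iff; assumption.
  - exists (replace_at U p (Var y)).
    assert (E : subst (σ ++ [(y, r0)]) (replace_at U p (Var y)) = replace_at (SB U) p r0).
    { rewrite (subst_replace_at _ U p (Var y) u0 Hp), subst_extend, subst_extend_new by
        (try exact Hy; intros q x Hq; exact (HU q _ Hq)). reflexivity. }
    split; [|split].
    + apply public_everywhere, (everywhere_replace_at _ (public_symbol_rebuild ns) U p _ u0 Hp).
      * revert HU. apply everywhere_impl. intros []; simpl; tauto.
      * apply everywhere_leaf; exact I.
    + rewrite E, (rename_replace_at (SB U) p r0 _ (subterm_at_subst σ _ _ _ Hp)). reflexivity.
    + rewrite E. exists p, (SB u0), r0. split; [apply subterm_at_subst, Hp|]. auto.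
Qed.

Lemma lifted_step_pi1 U p X r : admissible U -> subterm_at U p = Some (Pi1 X) ->
  root_step (Pi1 (R (SB X))) r -> lifted_step U (replace_at (R (SB U)) p r).
Proof.
  intros HU Hp Hr. apply root_step_pi1_inv in Hr. destruct Hr as (z & Hz).
  pose proof (admissible_child _ 0 _ (everywhere_subterm _ _ _ _ HU Hp) eq_refl) as HX.
  destruct (instance_not_leaf_cases X HX) as [LX|(v & Hv & Ev & Lv)]; [rewrite Hz; simpl; tauto| |].
  - destruct X; try (exfalso; apply LX; exact I); simpl in Hz; try discriminate.
    injection Hz as <- _. apply (lifted_step_same_frame U p _ X1 HU Hp).
    + apply (admissible_child (Pair X1 X2) 0); auto.
    + constructor.
  - rewrite Ev in Hz. destruct v; try (exfalso; apply Lv; exact I); simpl in Hz; try discriminate.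
    injection Hz as <- _. apply (lifted_step_extend_frame U p _ _ [1] _ HU Hp Hv eq_refl).
    + apply single_not_nonce. discriminate.
    + apply (ded_root_step _ _ (Pi1 (Pair v1 v2))); [exact I|intros c [<-|[]]|constructor].
      apply ded_ran, Hv.
    + change (SB (Pi1 X)) with (Pi1 (SB X)). rewrite Ev. constructor.
Qed.

Lemma lifted_step_pi2 U p X r : admissible U -> subterm_at U p = Some (Pi2 X) ->
  root_step (Pi2 (R (SB X))) r -> lifted_step U (replace_at (R (SB U)) p r).
Proof.
  intros HU Hp Hr. apply root_step_pi2_inv in Hr. destruct Hr as (z & Hz).
  pose proof (admissible_child _ 0 _ (everywhere_subterm _ _ _ _ HU Hp) eq_refl) as HX.
  destruct (instance_not_leaf_cases X HX) as [LX|(v & Hv & Ev & Lv)]; [rewrite Hz; simpl; tauto| |].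
  - destruct X; try (exfalso; apply LX; exact I); simpl in Hz; try discriminate.
    injection Hz as _ <-. apply (lifted_step_same_frame U p _ X2 HU Hp).
    + apply (admissible_child (Pair X1 X2) 1); auto.
    + constructor.
  - rewrite Ev in Hz. destruct v; try (exfalso; apply Lv; exact I); simpl in Hz; try discriminate.
    injection Hz as _ <-. apply (lifted_step_extend_frame U p _ _ [2] _ HU Hp Hv eq_refl).
    + apply single_not_nonce. discriminate.
    + apply (ded_root_step _ _ (Pi2 (Pair v1 v2))); [exact I|intros c [<-|[]]|constructor].
      apply ded_ran, Hv.
    + change (SB (Pi2 X)) with (Pi2 (SB X)). rewrite Ev. constructor.
Qed.

Lemma lifted_step_retrieve U p X r : admissible U -> subterm_at U p = Some (Retrieve X) ->
  root_step (Retrieve (R (SB X))) r -> lifted_step U (replace_at (R (SB U)) p r).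
Proof.
  intros HU Hp Hr. apply root_step_retrieve_inv in Hr. destruct Hr as (z & Hz).
  pose proof (admissible_child _ 0 _ (everywhere_subterm _ _ _ _ HU Hp) eq_refl) as HX.
  destruct (instance_not_leaf_cases X HX) as [LX|(v & Hv & Ev & Lv)]; [rewrite Hz; simpl; tauto| |].
  - destruct X; try (exfalso; apply LX; exact I); simpl in Hz; try discriminate.
    injection Hz as <- _. apply (lifted_step_same_frame U p _ X1 HU Hp).
    + apply (admissible_child (Sign X1 X2) 0); auto.
    + constructor.
  - rewrite Ev in Hz. destruct v; try (exfalso; apply Lv; exact I); simpl in Hz; try discriminate.
    injection Hz as <- _. apply (lifted_step_extend_frame U p _ _ [1] _ HU Hp Hv eq_refl).
    + apply single_not_nonce. discriminate.
    + apply (ded_root_step _ _ (Retrieve (Sign v1 v2))); [exact I|intros c [<-|[]]|constructor].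
      apply ded_ran, Hv.
    + change (SB (Retrieve X)) with (Retrieve (SB X)). rewrite Ev. constructor.
Qed.

Lemma lifted_step_dec U p X Y r : admissible U -> subterm_at U p = Some (Dec X Y) ->
  root_step (Dec (R (SB X)) (R (SB Y))) r -> lifted_step U (replace_at (R (SB U)) p r).
Proof.
  intros HU Hp Hr. apply root_step_dec_inv in Hr. destruct Hr as (z & Hz).
  pose proof (everywhere_subterm _ _ _ _ HU Hp) as Hu0.
  pose proof (admissible_child _ 0 _ Hu0 eq_refl) as HX.
  pose proof (admissible_child _ 1 _ Hu0 eq_refl) as HY.
  destruct (instance_not_leaf_cases X HX) as [LX|(v & Hv & Ev & Lv)]; [rewrite Hz; simpl; tauto| |].
  - destruct X; try (exfalso; apply LX; exact I); simpl in Hz; try discriminate.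
    injection Hz as <- E2 _. change (R (SB X2) = R (SB Y)) in E2.
    assert (E : SB X2 = SB Y).
    { apply rename_inj_matchable; [|apply matchable_instance, HY|exact E2].
      apply matchable_instance, (admissible_child (Enc X1 X2 X3) 1); auto. }
    apply (lifted_step_same_frame U p _ X1 HU Hp).
    + apply (admissible_child (Enc X1 X2 X3) 0); auto.
    + change (root_step (Dec (Enc (SB X1) (SB X2) (SB X3)) (SB Y)) (SB X1)). rewrite E. constructor.
  - rewrite Ev in Hz. destruct v; try (exfalso; apply Lv; exact I); simpl in Hz; try discriminate.
    injection Hz as <- E2 _. change (R v2 = R (SB Y)) in E2.
    pose proof (frame_subterm_keys_free _ (frame_subterm_ran _ Hv)) as [Kv2 _].
    assert (E : v2 = SB Y).
    { apply rename_inj_matchable; [|apply matchable_instance, HY|exact E2].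
      apply matchable_frame_fresh; [exact (frame_subterm_ran_child _ 1 _ Hv eq_refl)|exact Kv2]. }
    apply (lifted_step_extend_frame U p _ _ [1] _ HU Hp Hv eq_refl).
    + apply single_not_nonce. discriminate.
    + apply (ded_root_step _ _ (Dec (Enc v1 v2 v3) v2));
        [exact I|intros c [<-|[<-|[]]]|constructor].
      * apply ded_ran, Hv.
      * rewrite E. apply ded_instance, HY.
    + change (SB (Dec X Y)) with (Dec (SB X) (SB Y)). rewrite Ev, <- E. constructor.
Qed.

Lemma lifted_step_deca U p X Y r : admissible U -> subterm_at U p = Some (Deca X Y) ->
  root_step (Deca (R (SB X)) (R (SB Y))) r -> lifted_step U (replace_at (R (SB U)) p r).
Proof.
  intros HU Hp Hr. apply root_step_deca_inv in Hr. destruct Hr as (z2 & z3 & Hx & Hy).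
  pose proof (everywhere_subterm _ _ _ _ HU Hp) as Hu0.
  pose proof (admissible_child _ 0 _ Hu0 eq_refl) as HX.
  pose proof (admissible_child _ 1 _ Hu0 eq_refl) as HY.
  destruct (instance_priv Y z2 HY Hy) as (w & EY & Sw & Fw & ->).
  destruct (instance_not_leaf_cases X HX) as [LX|(v & Hv & Ev & Lv)]; [rewrite Hx; simpl; tauto| |].
  - destruct X; try (exfalso; apply LX; exact I); simpl in Hx; try discriminate.
    injection Hx as <- E2 _. change (R (SB X2) = Pub w) in E2.
    apply (instance_pub X2) in E2; [|apply (admissible_child (Enca X1 X2 X3) 1); auto|assumption..].
    apply (lifted_step_same_frame U p _ X1 HU Hp).
    + apply (admissible_child (Enca X1 X2 X3) 0); auto.
    + change (root_step (Deca (Enca (SB X1) (SB X2) (SB X3)) (SB Y)) (SB X1)).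
      rewrite E2, EY. constructor.
  - rewrite Ev in Hx. destruct v; try (exfalso; apply Lv; exact I); simpl in Hx; try discriminate.
    injection Hx as <- E2 _. change (R v2 = Pub w) in E2.
    pose proof (frame_subterm_keys_free _ (frame_subterm_ran _ Hv)) as [Kv2 _].
    rewrite rename_fresh in E2 by exact Kv2. subst v2.
    apply (lifted_step_extend_frame U p _ _ [1] _ HU Hp Hv eq_refl).
    + apply single_not_nonce. discriminate.
    + apply (ded_root_step _ _ (Deca (Enca v1 (Pub w) v3) (Priv w)));
        [exact I|intros c [<-|[<-|[]]]|constructor].
      * apply ded_ran, Hv.
      * rewrite <- EY. apply ded_instance, HY.
    + change (SB (Deca X Y)) with (Deca (SB X) (SB Y)). rewrite Ev, EY. constructor.
Qed.

Lemma instance_signature X Y z : admissible X -> admissible Y ->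
  R (SB Y) = Sign (R (SB X)) (Priv z) ->
  exists w, SB Y = Sign (SB X) (Priv w) /\ frame_subterm w /\ ~ occurs_name s w /\ z = w.
Proof.
  intros HX HY Hy.
  destruct (instance_not_leaf_cases Y HY) as [LY|(v & Hv & Ev & Lv)]; [rewrite Hy; simpl; tauto| |].
  - destruct Y; try (exfalso; apply LY; exact I); simpl in Hy; try discriminate.
    injection Hy as E1 E2. change (R (SB Y1) = R (SB X)) in E1. change (R (SB Y2) = Priv z) in E2.
    destruct (instance_priv Y2 z (admissible_child (Sign Y1 Y2) 1 Y2 HY eq_refl) E2)
      as (w & EY2 & Sw & Fw & ->).
    exists w. repeat split; [|assumption..].
    change (Sign (SB Y1) (SB Y2) = Sign (SB X) (Priv w)). rewrite EY2. f_equal.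
    apply rename_inj_matchable; [|apply matchable_instance, HX|exact E1].
    apply matchable_instance, (admissible_child (Sign Y1 Y2) 0); auto.
  - rewrite Ev in Hy. destruct v; try (exfalso; apply Lv; exact I); simpl in Hy; try discriminate.
    injection Hy as E1 E2. change (R v1 = R (SB X)) in E1. change (R v2 = Priv z) in E2.
    pose proof (frame_subterm_keys_free _ (frame_subterm_ran _ Hv)) as K.
    rewrite rename_fresh in E2 by exact K. subst v2.
    pose proof (frame_subterm_ran_child _ 1 _ Hv eq_refl) as SP.
    exists z. repeat split; [|exact (frame_subterm_child _ 0 _ SP eq_refl)|
                             exact (frame_subterm_keys_free _ SP)].
    rewrite Ev. f_equal. apply rename_inj_matchable; [|apply matchable_instance, HX|exact E1].
    apply matchable_frame_deducible; [exact (frame_subterm_ran_child _ 0 _ Hv eq_refl)|].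
    apply (ded_root_step _ _ (Retrieve (Sign v1 (Priv z)))); [exact I|intros c [<-|[]]|constructor].
    apply ded_ran, Hv.
Qed.

Lemma lifted_step_check U p X Y Z r : admissible U -> subterm_at U p = Some (Check X Y Z) ->
  root_step (Check (R (SB X)) (R (SB Y)) (R (SB Z))) r -> lifted_step U (replace_at (R (SB U)) p r).
Proof.
  intros HU Hp Hr. apply root_step_check_inv in Hr. destruct Hr as (z & Hy & Hz & ->).
  pose proof (everywhere_subterm _ _ _ _ HU Hp) as Hu0.
  pose proof (admissible_child _ 0 _ Hu0 eq_refl) as HX.
  pose proof (admissible_child _ 1 _ Hu0 eq_refl) as HY.
  pose proof (admissible_child _ 2 _ Hu0 eq_refl) as HZ.
  destruct (instance_signature X Y z HX HY Hy) as (w & EY & Sw & Fw & ->).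
  pose proof (instance_pub Z w HZ Hz Sw Fw) as EZ.
  apply (lifted_step_same_frame U p _ (Cst 0) HU Hp).
  - apply everywhere_leaf; exact I.
  - change (root_step (Check (SB X) (SB Y) (SB Z)) ok). rewrite EY, EZ. constructor.
Qed.

Lemma lifted_step_of_step U V : admissible U -> step (R (SB U)) V -> lifted_step U V.
Proof.
  intros HU (p & l & r & Hl & Hr & ->).
  destruct (redex_in_pattern U p l r HU Hl Hr) as (u0 & Hp & NL & ->).
  pose proof (root_step_destructor _ _ Hr) as HD.
  destruct u0; try (exfalso; apply NL; exact I); simpl in HD; try contradiction.
  - apply (lifted_step_dec U p u0_1 u0_2); assumption.
  - apply (lifted_step_deca U p u0_1 u0_2); assumption.
  - apply (lifted_step_pi1 U p u0); assumption.
  - apply (lifted_step_pi2 U p u0); assumption.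
  - apply (lifted_step_check U p u0_1 u0_2 u0_3); assumption.
  - apply (lifted_step_retrieve U p u0); assumption.
Qed.

Lemma admissible_of_public U : (forall p x, subterm_at U p = Some (Var x) -> In x (dom σ)) ->
  public ns U -> admissible U.
Proof.
  intros HV [HUn HUp] q [x|a| | | | | | | | | | | | |] Hq; simpl; auto.
  - exact (HV q x Hq).
  - intro Ha. apply (HUn a Ha). exists q. exact Hq.
  - exact (HUp q _ Hq).
Qed.

End Secrecy.

Theorem lemma2p8 (ns : list nat) (σ : subst_t) (s : nat) (U M V : term) :
  frame_subst σ ->
  In s ns ->
  well_formed ns σ s ->
  ~ ded ns σ (Nm s) ->
  (forall p x, subterm_at U p = Some (Var x) -> In x (dom σ)) ->
  closed M -> normal_form M ->
  public ns U -> public ns M ->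
  step (rename_name s M (subst σ U)) V ->
  exists σ' : subst_t,
    frame_subst σ' /\ well_formed ns σ' s /\
    (forall x, In x (dom σ) -> subst σ' (Var x) = subst σ (Var x)) /\
    (forall W, ded ns σ W <-> ded ns σ' W) /\
    exists V', public ns V' /\ V = rename_name s M (subst σ' V') /\
               step (subst σ U) (subst σ' V').
Proof.
  (* [In s ns] follows from [~ ded ns σ (Nm s)] (see [secret_restricted]). *)
  intros Hfs _ Hwf Hnd HV _ HMn HU HMp Hst.
  apply (lifted_step_of_step ns σ s M Hfs Hwf Hnd HMn HMp U V); [|exact Hst].
  apply admissible_of_public; assumption.
Qed.
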